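(* Let $A$ be a real $m\times m$ matrix, $f$ in the range of $A$, and $y$ the minimal-norm solution of $Ay=f$ (so $y\perp\mathcal{N}(A)$). Fix $q\in(0,1)$, $\alpha_0>0$, $C>1$, $\varepsilon\in(0,1)$. For each $\delta\in(0,1)$ let $f_\delta\in\mathbb{R}^m$ satisfy $\|f_\delta-f\|\le\delta$ and $(1-q)\alpha_0q\|Q_{\alpha_0q}^{-1}f_\delta\|>C\delta^\varepsilon$. Define $u_0^\delta=0$, $u_{n+1}^\delta=qu_n^\delta+(1-q)T_{\alpha_0q^{n+1}}^{-1}A^*f_\delta$, and let $n_\delta$ be the smallest integer $n\ge1$ with $G_n\le C\delta^\varepsilon$. Then $$\lim_{\delta\to0}\|u_{n_\delta}^\delta-y\|=0.$$
   Context: $A^*$ is the transpose of $A$, $T:=A^*A$, $T_a:=T+aI$, $Q:=AA^*$, $Q_a:=Q+aI$ for $a>0$; $\mathcal{N}(A)=\{u:Au=0\}$; $\|\cdot\|$ is the Euclidean norm. $G_0=0$ and $G_n=qG_{n-1}+(1-q)\alpha_0q^n\|Q_{\alpha_0q^n}^{-1}f_\delta\|$ for $n\ge1$. *)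

From Stdlib Require Import Reals Lra ClassicalEpsilon.
Open Scope R_scope.

(* vectors in R^m : functions nat -> R, only indices i < m are relevant;
   m x m matrices : functions nat -> nat -> R, only indices < m relevant *)
Definition vec := nat -> R.
Definition mat := nat -> nat -> R.

Fixpoint rsum (n : nat) (f : nat -> R) : R :=
  match n with O => 0 | S k => rsum k f + f k end.

Definition matvec (m : nat) (M : mat) (v : vec) : vec :=
  fun i => rsum m (fun j => M i j * v j).

Definition transp (A : mat) : mat := fun i j => A j i.

Definition vnorm (m : nat) (v : vec) : R := sqrt (rsum m (fun i => v i ^ 2)).

Definition vsub (u v : vec) : vec := fun i => u i - v i.

Definition idm (i j : nat) : R := if Nat.eqb i j then 1 else 0.

(* T_a = A^* A + a I ,  Q_a = A A^* + a I *)
Definition Tmat (m : nat) (A : mat) (a : R) : mat :=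
  fun i j => rsum m (fun k => A k i * A k j) + a * idm i j.
Definition Qmat (m : nat) (A : mat) (a : R) : mat :=
  fun i j => rsum m (fun k => A i k * A j k) + a * idm i j.

(* M^{-1} b : a (the) solution x of M x = b on R^m (chosen by epsilon;
   for invertible M it is unique on the indices < m) *)
Definition solve (m : nat) (M : mat) (b : vec) : vec :=
  epsilon (inhabits (fun _ => 0))
    (fun x => forall i, (i < m)%nat -> matvec m M x i = b i).

Fixpoint Gseq (m : nat) (A : mat) (q a0 : R) (fd : vec) (n : nat) : R :=
  match n with
  | O => 0
  | S k => q * Gseq m A q a0 fd k
           + (1 - q) * a0 * q ^ (S k) * vnorm m (solve m (Qmat m A (a0 * q ^ (S k))) fd)
  end.

Fixpoint useq (m : nat) (A : mat) (q a0 : R) (fd : vec) (n : nat) : vec :=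
  match n with
  | O => fun _ => 0
  | S k => fun i => q * useq m A q a0 fd k i
           + (1 - q) * solve m (Tmat m A (a0 * q ^ (S k))) (matvec m (transp A) fd) i
  end.

(* The minimal-norm solution lies in the range of A^*, say y = A^* v.  Tikhonov stability bounds
   the error of each regularized solution T_a^-1 A^* f_delta by delta/(2 sqrt a) + sqrt a |v|/2,
   and u_n averages these with geometric weights, so |u_n - y| <= c delta q^(-n/2) + c' q^(n/2).
   The discrepancy obeys G_n <= delta + 4 a0 |v| q^(n/2), hence the minimality of n_delta
   (C delta^eps < G_(n_delta - 1)) gives delta q^(-n_delta/2) = O(delta^(1-eps)).  For fixed n,
   G_n stays bounded away from 0 as delta -> 0 because f <> 0, so n_delta -> oo and the bias
   q^(n_delta/2) vanishes. *)

From Stdlib Require Import Reals Lra Lia Psatz ClassicalEpsilon.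
Open Scope R_scope.

Lemma rsum_ext n f g :
  (forall i, (i < n)%nat -> f i = g i) -> rsum n f = rsum n g.
Proof.
  induction n as [|n IH]; intros H; simpl; [reflexivity|].
  rewrite IH by (intros; apply H; lia); rewrite H by lia; reflexivity.
Qed.

Lemma rsum_plus n f g : rsum n (fun i => f i + g i) = rsum n f + rsum n g.
Proof. induction n as [|n IH]; simpl; [|rewrite IH]; ring. Qed.

Lemma rsum_minus n f g : rsum n (fun i => f i - g i) = rsum n f - rsum n g.
Proof. induction n as [|n IH]; simpl; [|rewrite IH]; ring. Qed.

Lemma rsum_scal_l n c f : rsum n (fun i => c * f i) = c * rsum n f.
Proof. induction n as [|n IH]; simpl; [|rewrite IH]; ring. Qed.

Lemma rsum_zero n : rsum n (fun _ => 0) = 0.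
Proof. induction n as [|n IH]; simpl; [|rewrite IH]; ring. Qed.

Lemma rsum_nonneg n f : (forall i, (i < n)%nat -> 0 <= f i) -> 0 <= rsum n f.
Proof.
  induction n as [|n IH]; intros H; simpl; [lra|].
  assert (0 <= rsum n f) by (apply IH; intros; apply H; lia).
  assert (0 <= f n) by (apply H; lia).
  lra.
Qed.

Lemma rsum_eq0_nonneg n f :
  (forall i, (i < n)%nat -> 0 <= f i) -> rsum n f = 0 ->
  forall i, (i < n)%nat -> f i = 0.
Proof.
  induction n as [|n IH]; simpl; intros Hpos Hsum i Hi; [lia|].
  assert (0 <= rsum n f) by (apply rsum_nonneg; intros; apply Hpos; lia).
  assert (0 <= f n) by (apply Hpos; lia).
  destruct (Nat.eq_dec i n) as [->|Hin]; [lra|].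
  apply IH; [intros; apply Hpos; lia | lra | lia].
Qed.

Lemma rsum_comm n k F :
  rsum n (fun i => rsum k (fun j => F i j)) = rsum k (fun j => rsum n (fun i => F i j)).
Proof.
  induction n as [|n IH]; simpl; [now rewrite rsum_zero|].
  rewrite IH, <- rsum_plus; reflexivity.
Qed.

Lemma rsum_idm m i x : (i < m)%nat -> rsum m (fun j => idm i j * x j) = x i.
Proof.
  induction m as [|m IH]; simpl; intros Hi; [lia|].
  unfold idm at 2. destruct (Nat.eq_dec i m) as [->|Hne].
  - rewrite Nat.eqb_refl, (rsum_ext _ _ (fun _ => 0)), rsum_zero; [ring|].
    intros j Hj; unfold idm; replace (Nat.eqb m j) with false by (symmetry; apply Nat.eqb_neq; lia); ring.
  - rewrite IH by lia; replace (Nat.eqb i m) with false by (symmetry; apply Nat.eqb_neq; lia); ring.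
Qed.

Definition ip (m : nat) (u v : vec) : R := rsum m (fun i => u i * v i).

Lemma ip_sym m u v : ip m u v = ip m v u.
Proof. apply rsum_ext; intros; ring. Qed.

Lemma ip_ext m u u' v v' :
  (forall i, (i < m)%nat -> u i = u' i) -> (forall i, (i < m)%nat -> v i = v' i) ->
  ip m u v = ip m u' v'.
Proof. intros Hu Hv; apply rsum_ext; intros i Hi; rewrite Hu, Hv by exact Hi; reflexivity. Qed.

Lemma ip_plus_l m u v w : ip m (fun i => u i + v i) w = ip m u w + ip m v w.
Proof. unfold ip; rewrite <- rsum_plus; apply rsum_ext; intros; ring. Qed.

Lemma ip_minus_l m u v w : ip m (fun i => u i - v i) w = ip m u w - ip m v w.
Proof. unfold ip; rewrite <- rsum_minus; apply rsum_ext; intros; ring. Qed.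

Lemma ip_scal_l m c u w : ip m (fun i => c * u i) w = c * ip m u w.
Proof. unfold ip; rewrite <- rsum_scal_l; apply rsum_ext; intros; ring. Qed.

Lemma ip_plus_r m u v w : ip m w (fun i => u i + v i) = ip m w u + ip m w v.
Proof. rewrite ip_sym, ip_plus_l, (ip_sym m u), (ip_sym m v); reflexivity. Qed.

Lemma ip_self_nonneg m v : 0 <= ip m v v.
Proof. apply rsum_nonneg; intros; nra. Qed.

Lemma ip_self_eq0 m z : ip m z z = 0 -> forall i, (i < m)%nat -> z i = 0.
Proof.
  intros H i Hi.
  assert (z i * z i = 0) by (apply (rsum_eq0_nonneg m (fun i => z i * z i)); auto; intros; nra).
  nra.
Qed.

Lemma ip_self_eq0_l m z u : ip m z z = 0 -> ip m z u = 0.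
Proof.
  intros H; unfold ip; rewrite (rsum_ext _ _ (fun _ => 0)) by
    (intros i Hi; rewrite (ip_self_eq0 m z H i Hi); ring).
  apply rsum_zero.
Qed.

Lemma ip_sqr_le m u v : ip m u v * ip m u v <= ip m u u * ip m v v.
Proof.
  destruct (Req_dec (ip m v v) 0) as [Hv0|Hv0].
  { rewrite (ip_sym m u v), ip_self_eq0_l, Hv0 by exact Hv0; lra. }
  set (t := ip m u v / ip m v v).
  assert (Hexp : ip m (fun i => u i - t * v i) (fun i => u i - t * v i) * ip m v v
                 = ip m u u * ip m v v - ip m u v * ip m u v).
  { replace (ip m (fun i => u i - t * v i) (fun i => u i - t * v i))
      with (ip m u u - 2 * t * ip m u v + t * t * ip m v v)
      by (unfold ip; rewrite <- !rsum_scal_l, <- rsum_minus, <- rsum_plus; apply rsum_ext; intros; ring).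
    unfold t; field; exact Hv0. }
  pose proof (Rmult_le_pos _ _ (ip_self_nonneg m (fun i => u i - t * v i)) (ip_self_nonneg m v)).
  lra.
Qed.

Lemma vnorm_ip m v : vnorm m v = sqrt (ip m v v).
Proof. unfold vnorm, ip; f_equal; apply rsum_ext; intros; ring. Qed.

Lemma vnorm_nonneg m v : 0 <= vnorm m v.
Proof. rewrite vnorm_ip; apply sqrt_pos. Qed.

Lemma vnorm_sqr m v : vnorm m v * vnorm m v = ip m v v.
Proof. rewrite vnorm_ip; apply sqrt_sqrt, ip_self_nonneg. Qed.

Lemma ip_le_vnorm m u v : ip m u v <= vnorm m u * vnorm m v.
Proof.
  pose proof (ip_sqr_le m u v) as Hsq; rewrite <- !vnorm_sqr in Hsq.
  pose proof (Rmult_le_pos _ _ (vnorm_nonneg m u) (vnorm_nonneg m v)).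
  assert (ip m u v * ip m u v <= (vnorm m u * vnorm m v) * (vnorm m u * vnorm m v)) by lra.
  nra.
Qed.

Lemma vnorm_ext m u v : (forall i, (i < m)%nat -> u i = v i) -> vnorm m u = vnorm m v.
Proof. intros H; rewrite !vnorm_ip; f_equal; apply ip_ext; exact H. Qed.

Lemma vnorm_eq0 m v : vnorm m v = 0 -> forall i, (i < m)%nat -> v i = 0.
Proof. intros H; apply ip_self_eq0; rewrite <- vnorm_sqr, H; ring. Qed.

Lemma vnorm_plus_le m u v : vnorm m (fun i => u i + v i) <= vnorm m u + vnorm m v.
Proof.
  pose proof (vnorm_nonneg m u); pose proof (vnorm_nonneg m v); pose proof (ip_le_vnorm m u v).
  apply Rsqr_incr_0_var; [|lra]; unfold Rsqr.
  rewrite vnorm_sqr, ip_plus_l, !ip_plus_r, (ip_sym m v u), <- !vnorm_sqr; lra.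
Qed.

Lemma vnorm_scal m c u : vnorm m (fun i => c * u i) = Rabs c * vnorm m u.
Proof.
  rewrite !vnorm_ip, <- sqrt_Rsqr_abs, <- sqrt_mult_alt by apply Rle_0_sqr.
  f_equal; unfold ip, Rsqr; rewrite <- rsum_scal_l; apply rsum_ext; intros; ring.
Qed.

Lemma vnorm_vsub_sym m u v : vnorm m (vsub u v) = vnorm m (vsub v u).
Proof.
  rewrite (vnorm_ext m (vsub u v) (fun i => -1 * vsub v u i)) by (intros; unfold vsub; ring).
  rewrite vnorm_scal, Rabs_left by lra; ring.
Qed.

Lemma matvec_ext m M u v i :
  (forall j, (j < m)%nat -> u j = v j) -> matvec m M u i = matvec m M v i.
Proof. intros H; apply rsum_ext; intros j Hj; rewrite H by exact Hj; reflexivity. Qed.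

Lemma matvec_minus m M u v i :
  matvec m M (fun j => u j - v j) i = matvec m M u i - matvec m M v i.
Proof. unfold matvec; rewrite <- rsum_minus; apply rsum_ext; intros; ring. Qed.

Lemma matvec_scal m M c u i : matvec m M (fun j => c * u j) i = c * matvec m M u i.
Proof. unfold matvec; rewrite <- rsum_scal_l; apply rsum_ext; intros; ring. Qed.

Lemma ip_matvec_transp m M x z : ip m (matvec m M x) z = ip m x (matvec m (transp M) z).
Proof.
  unfold ip, matvec, transp.
  rewrite (rsum_ext _ _ (fun i => rsum m (fun j => M i j * x j * z i)))
    by (intros; rewrite Rmult_comm, <- rsum_scal_l; apply rsum_ext; intros; ring).
  rewrite rsum_comm; apply rsum_ext; intros.
  rewrite <- rsum_scal_l; apply rsum_ext; intros; ring.
Qed.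

Lemma Qmat_Tmat m A a : Qmat m A a = Tmat m (transp A) a.
Proof. reflexivity. Qed.

Lemma Tmat_sym m A a i j : Tmat m A a i j = Tmat m A a j i.
Proof.
  unfold Tmat, idm; rewrite Nat.eqb_sym; f_equal.
  apply rsum_ext; intros; ring.
Qed.

Lemma matvec_Tmat m A a x i : (i < m)%nat ->
  matvec m (Tmat m A a) x i = matvec m (transp A) (matvec m A x) i + a * x i.
Proof.
  intros Hi; unfold matvec at 1; unfold Tmat.
  rewrite (rsum_ext _ _ (fun j => rsum m (fun k => A k i * A k j * x j) + a * (idm i j * x j)))
    by (intros; rewrite Rmult_plus_distr_r, (Rmult_comm _ (x _)), <- rsum_scal_l;
        f_equal; [apply rsum_ext; intros|]; ring).
  rewrite rsum_plus, rsum_scal_l, rsum_idm by exact Hi; f_equal.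
  unfold matvec, transp; rewrite rsum_comm; apply rsum_ext; intros.
  rewrite <- rsum_scal_l; apply rsum_ext; intros; ring.
Qed.

Lemma ip_Tmat m A a x :
  ip m x (matvec m (Tmat m A a) x) = ip m (matvec m A x) (matvec m A x) + a * ip m x x.
Proof.
  rewrite (ip_ext m x x _ (fun i => matvec m (transp A) (matvec m A x) i + a * x i))
    by (auto; intros; apply matvec_Tmat; assumption).
  rewrite ip_plus_r, <- ip_matvec_transp; f_equal.
  unfold ip; rewrite <- rsum_scal_l; apply rsum_ext; intros; ring.
Qed.

Lemma ip_rsum_r m k v (B : mat) c :
  ip m v (fun i => rsum k (fun l => B i l * c l)) = rsum k (fun l => c l * ip m v (fun i => B i l)).
Proof.
  unfold ip; rewrite (rsum_ext _ _ (fun i => rsum k (fun l => v i * B i l * c l)))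
    by (intros; rewrite <- rsum_scal_l; apply rsum_ext; intros; ring).
  rewrite rsum_comm; apply rsum_ext; intros.
  rewrite <- rsum_scal_l; apply rsum_ext; intros; ring.
Qed.

(* Gram-Schmidt: the residual of column [k] against the first [k] columns corrects the
   least-squares solution for [b]. *)
Lemma least_squares_exists m (B : mat) k : forall b : vec, exists w : vec,
  forall j, (j < k)%nat -> ip m (fun i => b i - rsum k (fun l => B i l * w l)) (fun i => B i j) = 0.
Proof.
  induction k as [|k IH]; intros b; [exists (fun _ => 0); intros; lia|].
  destruct (IH b) as [w0 Hw0], (IH (fun i => B i k)) as [wk Hwk].
  set (u := fun i => b i - rsum k (fun l => B i l * w0 l)) in Hw0.
  set (rk := fun i => B i k - rsum k (fun l => B i l * wk l)) in Hwk.
  set (g := ip m u rk / ip m rk rk).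
  exists (fun l => if Nat.eqb l k then g else w0 l - g * wk l).
  assert (Hres : forall i,
    b i - rsum (S k) (fun l => B i l * (if Nat.eqb l k then g else w0 l - g * wk l)) = u i - g * rk i).
  { intros i; simpl; rewrite Nat.eqb_refl.
    rewrite (rsum_ext _ _ (fun l => B i l * w0 l - g * (B i l * wk l))).
    - rewrite rsum_minus, rsum_scal_l; unfold u, rk; ring.
    - intros l Hl; replace (Nat.eqb l k) with false by (symmetry; apply Nat.eqb_neq; lia); ring. }
  assert (Hold : forall j, (j < k)%nat -> ip m (fun i => u i - g * rk i) (fun i => B i j) = 0).
  { intros j Hj; rewrite ip_minus_l, ip_scal_l, Hw0, Hwk by exact Hj; ring. }
  intros j Hj; rewrite (ip_ext m _ (fun i => u i - g * rk i) _ (fun i => B i j)) by auto.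
  destruct (Nat.eq_dec j k) as [->|Hjk]; [|apply Hold; lia].
  rewrite (ip_ext m _ (fun i => u i - g * rk i) _ (fun i => rk i + rsum k (fun l => B i l * wk l)))
    by (auto; intros; unfold rk; ring).
  rewrite ip_plus_r, ip_rsum_r, (rsum_ext _ _ (fun _ => 0))
    by (intros l Hl; rewrite Hold by exact Hl; ring).
  rewrite rsum_zero, ip_minus_l, ip_scal_l.
  destruct (Req_dec (ip m rk rk) 0) as [Hrk|Hrk].
  - rewrite (ip_sym m u rk), ip_self_eq0_l, Hrk by exact Hrk; ring.
  - unfold g; field; exact Hrk.
Qed.

Lemma normal_equations_solvable m (B : mat) (b : vec) :
  exists w, forall j, (j < m)%nat -> matvec m (transp B) (fun i => b i - matvec m B w i) j = 0.
Proof.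
  destruct (least_squares_exists m B m b) as [w Hw]; exists w; intros j Hj.
  rewrite <- (Hw j Hj); apply rsum_ext; intros; unfold transp, matvec; ring.
Qed.

Lemma symmetric_definite_solvable m (B : mat) (b : vec) :
  (forall i j, B i j = B j i) ->
  (forall z, ip m z (matvec m B z) = 0 -> ip m z z = 0) ->
  exists x, forall i, (i < m)%nat -> matvec m B x i = b i.
Proof.
  intros Hsym Hdef; destruct (normal_equations_solvable m B b) as [w Hw]; exists w.
  set (z := fun i => b i - matvec m B w i) in Hw.
  assert (Hz : ip m z (matvec m B z) = 0).
  { unfold ip; rewrite (rsum_ext _ _ (fun _ => 0)); [apply rsum_zero|].
    intros i Hi.
    replace (matvec m B z i) with (matvec m (transp B) z i)
      by (apply rsum_ext; intros; unfold transp; rewrite Hsym; reflexivity).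
    rewrite Hw by exact Hi; ring. }
  intros i Hi; pose proof (ip_self_eq0 m z (Hdef z Hz) i Hi) as Hzi; unfold z in Hzi; lra.
Qed.

Lemma solve_Tmat m A a b : 0 < a ->
  forall i, (i < m)%nat -> matvec m (Tmat m A a) (solve m (Tmat m A a) b) i = b i.
Proof.
  intros Ha; unfold solve; apply epsilon_spec, symmetric_definite_solvable; [apply Tmat_sym|].
  intros z Hz; rewrite ip_Tmat in Hz.
  pose proof (ip_self_nonneg m (matvec m A z)); pose proof (ip_self_nonneg m z); nra.
Qed.

Lemma solve_Qmat m A a b : 0 < a ->
  forall i, (i < m)%nat -> matvec m (Qmat m A a) (solve m (Qmat m A a) b) i = b i.
Proof. rewrite Qmat_Tmat; apply solve_Tmat. Qed.

Lemma min_norm_solution_in_range m A f y :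
  (forall i, (i < m)%nat -> matvec m A y i = f i) ->
  (forall z, (forall i, (i < m)%nat -> matvec m A z i = f i) -> vnorm m y <= vnorm m z) ->
  exists v, forall i, (i < m)%nat -> y i = matvec m (transp A) v i.
Proof.
  intros Hy Hmin; destruct (normal_equations_solvable m (transp A) y) as [w Hw]; exists w.
  set (y' := matvec m (transp A) w) in Hw.
  set (z := fun i => y i - y' i) in Hw.
  assert (Hy' : forall i, (i < m)%nat -> matvec m A y' i = f i).
  { intros i Hi; rewrite <- Hy by exact Hi.
    rewrite (matvec_ext m A y' (fun j => y j - z j)), matvec_minus by (unfold z; intros; ring).
    change (matvec m (transp (transp A)) z i) with (matvec m A z i) in Hw.
    rewrite Hw by exact Hi; ring. }
  assert (Horth : ip m y' z = 0).
  { unfold y'; rewrite ip_matvec_transp; unfold ip.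
    rewrite (rsum_ext _ _ (fun _ => 0)) by (intros i Hi; rewrite Hw by exact Hi; ring).
    apply rsum_zero. }
  assert (Hpyth : ip m y y = ip m y' y' + ip m z z).
  { rewrite (ip_ext m y (fun i => y' i + z i) y (fun i => y' i + z i)) by (unfold z; intros; ring).
    rewrite ip_plus_l, !ip_plus_r, (ip_sym m z y'), Horth; ring. }
  assert (Hle : ip m y y <= ip m y' y').
  { rewrite <- !vnorm_sqr; apply Rmult_le_compat; auto; apply vnorm_nonneg. }
  assert (Hz0 : ip m z z = 0) by (pose proof (ip_self_nonneg m z); lra).
  intros i Hi; pose proof (ip_self_eq0 m z Hz0 i Hi) as Hzi; unfold z, y' in Hzi; lra.
Qed.

Lemma vnorm_vsub_le m u w : vnorm m (vsub u w) <= vnorm m u + vnorm m w.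
Proof.
  rewrite (vnorm_ext m (vsub u w) (fun i => u i + -1 * w i)) by (intros; unfold vsub; ring).
  eapply Rle_trans; [apply vnorm_plus_le|].
  rewrite vnorm_scal, Rabs_left by lra; lra.
Qed.

Lemma vnorm_le_vsub m u w : vnorm m u <= vnorm m w + vnorm m (vsub u w).
Proof.
  rewrite (vnorm_ext m u (fun i => w i + vsub u w i)) by (intros; unfold vsub; ring).
  apply vnorm_plus_le.
Qed.

Lemma Tmat_solution_le m A a x g : 0 < a ->
  (forall i, (i < m)%nat -> matvec m (Tmat m A a) x i = g i) -> a * vnorm m x <= vnorm m g.
Proof.
  intros Ha Hx.
  assert (Hsq : a * (vnorm m x * vnorm m x) <= vnorm m x * vnorm m g).
  { rewrite vnorm_sqr; eapply Rle_trans; [|apply ip_le_vnorm].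
    rewrite <- (ip_ext m x x _ _ (fun _ _ => eq_refl) Hx), ip_Tmat.
    pose proof (ip_self_nonneg m (matvec m A x)); lra. }
  pose proof (vnorm_nonneg m x); pose proof (vnorm_nonneg m g); nra.
Qed.

Lemma Tmat_transp_solution_le m A a x g : 0 < a ->
  (forall i, (i < m)%nat -> matvec m (Tmat m A a) x i = matvec m (transp A) g i) ->
  2 * sqrt a * vnorm m x <= vnorm m g.
Proof.
  intros Ha Hx.
  assert (Hsq : a * (vnorm m x * vnorm m x) <= vnorm m g * vnorm m g / 4).
  { assert (E : ip m x (matvec m (Tmat m A a) x) = ip m (matvec m A x) g)
      by (rewrite ip_matvec_transp; apply ip_ext; auto).
    rewrite ip_Tmat, <- !vnorm_sqr in E; pose proof (ip_le_vnorm m (matvec m A x) g).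
    pose proof (Rle_0_sqr (vnorm m (matvec m A x) - vnorm m g / 2)); unfold Rsqr in *; nra. }
  assert (sqrt a * sqrt a = a) by (apply sqrt_sqrt; lra).
  pose proof (sqrt_pos a); pose proof (vnorm_nonneg m x); pose proof (vnorm_nonneg m g).
  apply Rsqr_incr_0_var; [unfold Rsqr; nra | assumption].
Qed.

Lemma Qsolve_sub_le m A a f g : 0 < a ->
  a * vnorm m (solve m (Qmat m A a) f) <= a * vnorm m (solve m (Qmat m A a) g) + vnorm m (vsub g f).
Proof.
  intros Ha; set (xf := solve m (Qmat m A a) f); set (xg := solve m (Qmat m A a) g).
  assert (Hx : a * vnorm m (vsub xf xg) <= vnorm m (vsub f g)).
  { apply (Tmat_solution_le m (transp A)); [exact Ha|].
    intros i Hi; unfold vsub; rewrite matvec_minus, <- Qmat_Tmat.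
    unfold xf, xg; rewrite !solve_Qmat by assumption; reflexivity. }
  rewrite (vnorm_vsub_sym m f g) in Hx.
  pose proof (Rmult_le_compat_l a _ _ (Rlt_le _ _ Ha) (vnorm_le_vsub m xf xg)); lra.
Qed.

Section Regularization.

Variables (m : nat) (A : mat) (f y v : vec).
Hypothesis Hy : forall i, (i < m)%nat -> matvec m A y i = f i.
Hypothesis Hv : forall i, (i < m)%nat -> y i = matvec m (transp A) v i.

Lemma Tsolve_error_le a g d : 0 < a -> vnorm m (vsub g f) <= d ->
  vnorm m (vsub (solve m (Tmat m A a) (matvec m (transp A) g)) y)
  <= d / (2 * sqrt a) + sqrt a * vnorm m v / 2.
Proof.
  intros Ha Hg; set (s := solve m (Tmat m A a) (matvec m (transp A) g)).
  assert (Hs : 2 * sqrt a * vnorm m (vsub s y) <= vnorm m (vsub g f) + a * vnorm m v).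
  { eapply Rle_trans.
    - apply (Tmat_transp_solution_le m A a _ (vsub (vsub g f) (fun i => a * v i)) Ha).
      intros i Hi; unfold vsub; rewrite matvec_minus, !matvec_minus, matvec_scal.
      unfold s; rewrite solve_Tmat, matvec_Tmat, Hv by assumption.
      rewrite (matvec_ext m (transp A) (matvec m A y) f) by assumption; ring.
    - replace (a * vnorm m v) with (vnorm m (fun i => a * v i))
        by (rewrite vnorm_scal, Rabs_right; lra).
      apply vnorm_vsub_le. }
  assert (Hsa : 0 < sqrt a) by (apply sqrt_lt_R0; exact Ha).
  apply (Rmult_le_reg_l (2 * sqrt a)); [lra|].
  replace (2 * sqrt a * (d / (2 * sqrt a) + sqrt a * vnorm m v / 2))
    with (d + sqrt a * sqrt a * vnorm m v) by (field; lra).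
  rewrite sqrt_sqrt by lra; lra.
Qed.

Lemma Qsolve_le a g : 0 < a ->
  a * vnorm m (solve m (Qmat m A a) g) <= vnorm m (vsub g f) + 2 * a * vnorm m v.
Proof.
  intros Ha; set (x := solve m (Qmat m A a) g).
  assert (Hx : a * vnorm m (vsub x v) <= vnorm m (vsub g f) + a * vnorm m v).
  { eapply Rle_trans.
    - apply (Tmat_solution_le m (transp A) a _ (vsub (vsub g f) (fun i => a * v i)) Ha).
      intros i Hi; unfold vsub; rewrite matvec_minus; unfold x; rewrite <- Qmat_Tmat.
      rewrite solve_Qmat, Qmat_Tmat, matvec_Tmat by assumption.
      change (transp (transp A)) with A.
      rewrite (matvec_ext m A (matvec m (transp A) v) y), Hy by (auto; intros; symmetry; auto).
      ring.
    - replace (a * vnorm m v) with (vnorm m (fun i => a * v i))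
        by (rewrite vnorm_scal, Rabs_right; lra).
      apply vnorm_vsub_le. }
  pose proof (Rmult_le_compat_l a _ _ (Rlt_le _ _ Ha) (vnorm_le_vsub m x v)); lra.
Qed.

End Regularization.

(* [D + c1 r^-n + 2 c2 r^n] is a supersolution of the averaged recursion: the slack in one
   step is [c1 r^(1-n) (1 - r) + c2 r^(n+1) (1 - r)^2]. *)
Lemma averaged_recursion_le (x : nat -> R) r D c1 c2 :
  0 < r < 1 -> 0 <= c1 -> 0 <= c2 ->
  x 0%nat <= D + c1 + 2 * c2 ->
  (forall k, x (S k) <= r * r * x k + (1 - r * r) * (D + c1 * (/ r) ^ S k + c2 * r ^ S k)) ->
  forall n, x n <= D + c1 * (/ r) ^ n + 2 * c2 * r ^ n.
Proof.
  intros Hr Hc1 Hc2 H0 HS n; induction n as [|n IH]; [simpl; lra|].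
  eapply Rle_trans; [apply HS|].
  assert (Hu : 0 <= (/ r) ^ n) by (apply pow_le; left; apply Rinv_0_lt_compat; lra).
  assert (Hw : 0 <= r ^ n) by (apply pow_le; lra).
  assert (Hslack : D + c1 * (/ r) ^ S n + 2 * c2 * r ^ S n
                   - (r * r * (D + c1 * (/ r) ^ n + 2 * c2 * r ^ n)
                      + (1 - r * r) * (D + c1 * (/ r) ^ S n + c2 * r ^ S n))
                   = c1 * (/ r) ^ n * r * (1 - r) + c2 * r ^ n * r * ((1 - r) * (1 - r))).
  { simpl; field; lra. }
  assert (0 <= c1 * (/ r) ^ n * r * (1 - r)) by (repeat apply Rmult_le_pos; lra).
  assert (0 <= c2 * r ^ n * r * ((1 - r) * (1 - r))) by (repeat apply Rmult_le_pos; lra).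
  assert (r * r * x n <= r * r * (D + c1 * (/ r) ^ n + 2 * c2 * r ^ n))
    by (apply Rmult_le_compat_l; nra).
  lra.
Qed.

Lemma sqrt_pow x n : 0 <= x -> sqrt (x ^ n) = sqrt x ^ n.
Proof.
  intros Hx; rewrite <- (sqrt_sqrt x Hx) at 1.
  rewrite Rpow_mult_distr; apply sqrt_square, pow_le, sqrt_pos.
Qed.

Lemma pow_le_sqrt_pow x n : 0 <= x <= 1 -> x ^ n <= sqrt x ^ n.
Proof.
  intros Hx; rewrite <- (sqrt_sqrt x) at 1 by lra; rewrite Rpow_mult_distr.
  assert (0 <= sqrt x <= 1) by (split; [apply sqrt_pos|rewrite <- sqrt_1; apply sqrt_le_1_alt; lra]).
  assert (0 <= sqrt x ^ n) by (apply pow_le; lra).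
  assert (sqrt x ^ n <= 1) by (rewrite <- (pow1 n); apply pow_incr; lra).
  nra.
Qed.

Lemma Rpower_gt_self d p : 0 < d < 1 -> 0 < p < 1 -> d < Rpower d p.
Proof.
  intros Hd Hp; unfold Rpower; rewrite <- (exp_ln d) at 1 by lra; apply exp_increasing.
  assert (ln d < 0) by (rewrite <- ln_1; apply ln_increasing; lra); nra.
Qed.

Lemma Rpower_small_near_0 p K e : 0 < p -> 0 <= K -> 0 < e ->
  exists eta, 0 < eta /\ forall d, 0 < d < eta -> K * Rpower d p < e.
Proof.
  intros Hp HK He; exists (Rpower (e / (K + 1)) (/ p)); split; [apply exp_pos|].
  intros d Hd.
  assert (Hlt : Rpower d p < e / (K + 1)).
  { replace (e / (K + 1)) with (Rpower (Rpower (e / (K + 1)) (/ p)) p).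
    - apply Rlt_Rpower_l; lra.
    - rewrite Rpower_mult, Rinv_l, Rpower_1 by (try apply Rdiv_lt_0_compat; lra); reflexivity. }
  pose proof (exp_pos (p * ln d)) as Hpos; fold (Rpower d p) in Hpos.
  apply (Rmult_lt_compat_l (K + 1)) in Hlt; [|lra].
  replace ((K + 1) * (e / (K + 1))) with e in Hlt by (field; lra); nra.
Qed.

Lemma pow_small_eventually r K e : 0 <= r < 1 -> 0 <= K -> 0 < e ->
  exists N, forall n, (N <= n)%nat -> K * r ^ n < e.
Proof.
  intros Hr HK He.
  destruct (pow_lt_1_zero r ltac:(rewrite Rabs_right; lra) (e / (K + 1))) as [N HN];
    [apply Rdiv_lt_0_compat; lra|].
  exists N; intros n Hn; specialize (HN n Hn); rewrite Rabs_right in HN by (apply Rle_ge, pow_le; lra).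
  apply (Rmult_lt_compat_l (K + 1)) in HN; [|lra].
  replace ((K + 1) * (e / (K + 1))) with e in HN by (field; lra).
  pose proof (pow_le r n ltac:(lra)); nra.
Qed.

Section Iteration.

Variables (m : nat) (A : mat) (f y v : vec) (q a0 : R).
Hypothesis Hy : forall i, (i < m)%nat -> matvec m A y i = f i.
Hypothesis Hv : forall i, (i < m)%nat -> y i = matvec m (transp A) v i.
Hypothesis Hq : 0 < q < 1.
Hypothesis Ha0 : 0 < a0.

Lemma sqrt_q_bounds : 0 < sqrt q < 1.
Proof. split; [apply sqrt_lt_R0; lra | rewrite <- sqrt_1; apply sqrt_lt_1_alt; lra]. Qed.

Lemma reg_param_pos n : 0 < a0 * q ^ n.
Proof. apply Rmult_lt_0_compat; [exact Ha0 | apply pow_lt; lra]. Qed.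

Lemma Gseq_nonneg g n : 0 <= Gseq m A q a0 g n.
Proof.
  induction n as [|n IH]; cbn [Gseq]; [lra|].
  pose proof (pow_lt q (S n) ltac:(lra)).
  apply Rplus_le_le_0_compat; [nra|].
  apply Rmult_le_pos; [|apply vnorm_nonneg].
  apply Rmult_le_pos; [apply Rmult_le_pos|]; lra.
Qed.

Lemma Gseq_ge g d n : vnorm m (vsub g f) <= d -> (1 <= n)%nat ->
  (1 - q) * (a0 * q ^ n * vnorm m (solve m (Qmat m A (a0 * q ^ n)) f)) - d <= Gseq m A q a0 g n.
Proof.
  intros Hg Hn; destruct n as [|n]; [lia|]; cbn [Gseq].
  pose proof (Qsolve_sub_le m A (a0 * q ^ S n) f g (reg_param_pos (S n))).
  pose proof (Gseq_nonneg g n).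
  assert (0 <= vnorm m (vsub g f)) by apply vnorm_nonneg.
  nra.
Qed.

Lemma Gseq_le g d n : vnorm m (vsub g f) <= d ->
  Gseq m A q a0 g n <= d + 4 * a0 * vnorm m v * sqrt q ^ n.
Proof.
  intros Hg; pose proof sqrt_q_bounds as Hr.
  assert (Hd : 0 <= d) by (pose proof (vnorm_nonneg m (vsub g f)); lra).
  assert (HV : 0 <= vnorm m v) by apply vnorm_nonneg.
  replace (d + 4 * a0 * vnorm m v * sqrt q ^ n)
    with (d + 0 * (/ sqrt q) ^ n + 2 * (2 * a0 * vnorm m v) * sqrt q ^ n) by ring.
  revert n; apply averaged_recursion_le; try lra; [nra | simpl; nra |].
  intros k; rewrite sqrt_sqrt by lra; cbn [Gseq].
  pose proof (Qsolve_le m A f y v Hy Hv (a0 * q ^ S k) g (reg_param_pos (S k))).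
  pose proof (Rmult_le_compat_l (a0 * vnorm m v) _ _ ltac:(nra) (pow_le_sqrt_pow q (S k) ltac:(lra))).
  nra.
Qed.

Lemma sqrt_reg_param n : sqrt (a0 * q ^ n) = sqrt a0 * sqrt q ^ n.
Proof. rewrite sqrt_mult_alt, sqrt_pow by lra; reflexivity. Qed.

Lemma useq_error_le g d n : vnorm m (vsub g f) <= d ->
  vnorm m (vsub (useq m A q a0 g n) y)
  <= d / (2 * sqrt a0) * (/ sqrt q) ^ n + (2 * vnorm m y + sqrt a0 * vnorm m v) * sqrt q ^ n.
Proof.
  intros Hg; pose proof sqrt_q_bounds as Hr.
  assert (Hd : 0 <= d) by (pose proof (vnorm_nonneg m (vsub g f)); lra).
  assert (HY : 0 <= vnorm m y) by apply vnorm_nonneg.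
  assert (HV : 0 <= vnorm m v) by apply vnorm_nonneg.
  assert (Hsa : 0 < sqrt a0) by (apply sqrt_lt_R0; lra).
  set (c1 := d / (2 * sqrt a0)); set (c2 := vnorm m y + sqrt a0 * vnorm m v / 2).
  assert (Hc1 : 0 <= c1) by (unfold c1; apply Rmult_le_pos; [lra | left; apply Rinv_0_lt_compat; lra]).
  assert (Hc2 : 0 <= c2) by (unfold c2; nra).
  replace ((2 * vnorm m y + sqrt a0 * vnorm m v) * sqrt q ^ n) with (2 * c2 * sqrt q ^ n)
    by (unfold c2; field).
  replace (c1 * (/ sqrt q) ^ n) with (0 + c1 * (/ sqrt q) ^ n) by ring.
  revert n; apply averaged_recursion_le; try lra.
  - simpl; rewrite (vnorm_ext m _ (fun i => -1 * y i)) by (intros; unfold vsub; ring).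
    rewrite vnorm_scal, Rabs_left by lra; unfold c2; nra.
  - intros k; rewrite sqrt_sqrt by lra.
    set (s := solve m (Tmat m A (a0 * q ^ S k)) (matvec m (transp A) g)).
    rewrite (vnorm_ext m _ (fun i => q * vsub (useq m A q a0 g k) y i + (1 - q) * vsub s y i))
      by (intros; unfold vsub, s; cbn [useq]; ring).
    eapply Rle_trans; [apply vnorm_plus_le|]; rewrite !vnorm_scal, !Rabs_right by lra.
    apply Rplus_le_compat_l, Rmult_le_compat_l; [lra|].
    pose proof (Tsolve_error_le m A f y v Hy Hv _ g d (reg_param_pos (S k)) Hg) as Herr.
    fold s in Herr; rewrite sqrt_reg_param in Herr.
    assert (Hw : 0 < sqrt q ^ S k) by (apply pow_lt; lra).
    rewrite pow_inv; set (w := sqrt q ^ S k) in *.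
    replace (d / (2 * (sqrt a0 * w))) with (c1 * / w) in Herr by (unfold c1; field; lra).
    unfold c2; nra.
Qed.

Variables (C eps : R) (fd : R -> vec) (nd : R -> nat).
Hypothesis HC : 1 < C.
Hypothesis Heps : 0 < eps < 1.
Hypothesis Hfd : forall d, 0 < d < 1 -> vnorm m (vsub (fd d) f) <= d.
Hypothesis Hfd2 : forall d, 0 < d < 1 ->
  (1 - q) * a0 * q * vnorm m (solve m (Qmat m A (a0 * q)) (fd d)) > C * Rpower d eps.
Hypothesis Hnd : forall d, 0 < d < 1 ->
  (1 <= nd d)%nat /\ Gseq m A q a0 (fd d) (nd d) <= C * Rpower d eps /\
  (forall n, (1 <= n)%nat -> Gseq m A q a0 (fd d) n <= C * Rpower d eps -> (nd d <= n)%nat).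

(* The initial discrepancy condition [Hfd2] forces [f <> 0]. *)
Lemma exact_Qsolve_pos a : 0 < a -> 0 < vnorm m (solve m (Qmat m A a) f).
Proof.
  intros Ha; destruct (vnorm_nonneg m (solve m (Qmat m A a) f)) as [Hpos|Hzero]; [exact Hpos|exfalso].
  assert (Hf0 : forall i, (i < m)%nat -> f i = 0).
  { intros i Hi; rewrite <- (solve_Qmat m A a f Ha i Hi); unfold matvec.
    rewrite (rsum_ext _ _ (fun _ => 0)); [apply rsum_zero|].
    intros j Hj; rewrite (vnorm_eq0 m _ (eq_sym Hzero) j Hj); ring. }
  assert (Hd : 0 < / 2 < 1) by lra.
  assert (Haq : 0 < a0 * q) by nra.
  set (x := solve m (Qmat m A (a0 * q)) (fd (/ 2))).
  assert (Hnorm : vnorm m (fd (/ 2)) = vnorm m (vsub (fd (/ 2)) f))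
    by (apply vnorm_ext; intros i Hi; unfold vsub; rewrite Hf0 by exact Hi; ring).
  assert (Hx : a0 * q * vnorm m x <= vnorm m (fd (/ 2)))
    by (apply (Tmat_solution_le m (transp A)); [exact Haq | apply solve_Qmat; exact Haq]).
  pose proof (Hfd _ Hd) as Hfd_half.
  pose proof (Hfd2 _ Hd) as Hdisc; fold x in Hdisc.
  pose proof (Rpower_gt_self (/ 2) eps Hd Heps) as Hhalf_lt.
  assert (Rpower (/ 2) eps < C * Rpower (/ 2) eps)
    by (pose proof (exp_pos (eps * ln (/ 2))); unfold Rpower in *; nra).
  nra.
Qed.

Lemma stopping_index_gt N : exists eta, 0 < eta /\ forall d, 0 < d < 1 -> d < eta -> (N < nd d)%nat.
Proof.
  induction N as [|N [eta [Heta HN]]].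
  { exists 1; split; [lra|]; intros d Hd _; destruct (Hnd d Hd); lia. }
  set (w := (1 - q) * (a0 * q ^ S N * vnorm m (solve m (Qmat m A (a0 * q ^ S N)) f))).
  assert (Hw : 0 < w).
  { apply Rmult_lt_0_compat; [lra|].
    apply Rmult_lt_0_compat; [|apply exact_Qsolve_pos]; apply reg_param_pos. }
  destruct (Rpower_small_near_0 eps (1 + C) w) as [eta' [Heta' Hsmall]]; try lra.
  exists (Rmin eta eta'); split; [apply Rmin_pos; assumption|].
  intros d Hd Hdeta.
  pose proof (HN d Hd (Rlt_le_trans _ _ _ Hdeta (Rmin_l _ _))) as HgtN.
  destruct (Nat.eq_dec (nd d) (S N)) as [Heq|]; [exfalso|lia].
  destruct (Hnd d Hd) as [_ [HG _]]; rewrite Heq in HG.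
  pose proof (Gseq_ge (fd d) d (S N) (Hfd d Hd) ltac:(lia)) as HGge; fold w in HGge.
  pose proof (Hsmall d (conj (proj1 Hd) (Rlt_le_trans _ _ _ Hdeta (Rmin_r _ _)))) as Hw_gt.
  pose proof (Rpower_gt_self d eps Hd Heps) as Hd_lt.
  lra.
Qed.

(* Before stopping, [C d^eps < G_(n_d - 1) <= d + 4 a0 |v| q^((n_d - 1)/2)]: this ties the
   amplification [q^(-n_d/2)] of the data error to [d^(-eps)]. *)
Lemma stopping_noise_le d : 0 < d < 1 -> (2 <= nd d)%nat ->
  d * (/ sqrt q) ^ nd d <= Rpower d (1 - eps) * (4 * a0 * vnorm m v / ((C - 1) * sqrt q)).
Proof.
  intros Hd Hn; pose proof sqrt_q_bounds as Hr.
  destruct (Hnd d Hd) as [_ [_ Hmin]].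
  set (p := (nd d - 1)%nat); replace (nd d) with (S p) by (unfold p; lia).
  assert (HGp : C * Rpower d eps < Gseq m A q a0 (fd d) p).
  { destruct (Rlt_le_dec (C * Rpower d eps) (Gseq m A q a0 (fd d) p)) as [Hlt|Hle]; [exact Hlt|].
    specialize (Hmin p ltac:(unfold p; lia) Hle); unfold p in Hmin; lia. }
  pose proof (Gseq_le (fd d) d p (Hfd d Hd)) as HGp_le.
  pose proof (Rpower_gt_self d eps Hd Heps) as Hd_lt.
  assert (Hsplit : d = Rpower d (1 - eps) * Rpower d eps).
  { rewrite <- Rpower_plus; replace (1 - eps + eps) with 1 by ring; rewrite Rpower_1; lra. }
  assert (Hrp : (/ sqrt q) ^ p * sqrt q ^ p = 1) by (rewrite <- Rpow_mult_distr, Rinv_l, pow1; lra).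
  assert (Hrp0 : 0 < (/ sqrt q) ^ p) by (apply pow_lt, Rinv_0_lt_compat; lra).
  set (beta := 4 * a0 * vnorm m v) in *; set (rho := (/ sqrt q) ^ p) in *.
  set (phi := Rpower d eps) in *; set (R1 := Rpower d (1 - eps)) in *.
  assert (Hphi : phi * rho <= beta / (C - 1)).
  { apply (Rmult_le_reg_l (C - 1)); [lra|].
    replace ((C - 1) * (beta / (C - 1))) with beta by (field; lra).
    assert (Hgap : (C - 1) * phi < beta * sqrt q ^ p) by lra.
    apply (Rmult_lt_compat_r rho) in Hgap; [|exact Hrp0].
    replace (beta * sqrt q ^ p * rho) with (beta * (rho * sqrt q ^ p)) in Hgap by ring.
    rewrite Hrp, Rmult_1_r in Hgap; lra. }
  replace (d * (/ sqrt q) ^ S p) with (R1 * / sqrt q * (phi * rho)) by (rewrite Hsplit; simpl; unfold rho; ring).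
  replace (R1 * (beta / ((C - 1) * sqrt q))) with (R1 * / sqrt q * (beta / (C - 1))) by (field; lra).
  apply Rmult_le_compat_l; [|exact Hphi].
  assert (0 < R1) by (unfold R1, Rpower; apply exp_pos).
  pose proof (Rinv_0_lt_compat _ (proj1 Hr)); nra.
Qed.

Lemma stopped_iterate_converges : forall e, 0 < e -> exists eta, 0 < eta /\
  forall d, 0 < d < 1 -> d < eta -> vnorm m (vsub (useq m A q a0 (fd d) (nd d)) y) < e.
Proof.
  intros e He; pose proof sqrt_q_bounds as Hr.
  assert (Hsa : 0 < sqrt a0) by (apply sqrt_lt_R0; lra).
  set (K := 4 * a0 * vnorm m v / ((C - 1) * sqrt q)).
  set (B := 2 * vnorm m y + sqrt a0 * vnorm m v).
  assert (HK0 : 0 <= K).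
  { pose proof (vnorm_nonneg m v); unfold K.
    apply Rmult_le_pos; [nra | left; apply Rinv_0_lt_compat; nra]. }
  assert (HB : 0 <= B) by (pose proof (vnorm_nonneg m y); pose proof (vnorm_nonneg m v); unfold B; nra).
  assert (HK : 0 <= / (2 * sqrt a0) * K) by (apply Rmult_le_pos; [left; apply Rinv_0_lt_compat|]; lra).
  destruct (pow_small_eventually (sqrt q) B (e / 2)) as [N Hbias]; try lra.
  destruct (stopping_index_gt (S N)) as [eta1 [Heta1 Hgt]].
  destruct (Rpower_small_near_0 (1 - eps) (/ (2 * sqrt a0) * K) (e / 2)) as [eta2 [Heta2 Hnoise]];
    try lra.
  exists (Rmin eta1 eta2); split; [apply Rmin_pos; assumption|].
  intros d Hd Hdeta.
  specialize (Hgt d Hd (Rlt_le_trans _ _ _ Hdeta (Rmin_l _ _))).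
  specialize (Hbias (nd d) ltac:(lia)).
  specialize (Hnoise d (conj (proj1 Hd) (Rlt_le_trans _ _ _ Hdeta (Rmin_r _ _)))).
  pose proof (useq_error_le (fd d) d (nd d) (Hfd d Hd)) as Herr.
  pose proof (stopping_noise_le d Hd ltac:(lia)) as Hamp.
  apply (Rmult_le_compat_l (/ (2 * sqrt a0))) in Hamp; [|left; apply Rinv_0_lt_compat; lra].
  replace (d / (2 * sqrt a0) * (/ sqrt q) ^ nd d) with (/ (2 * sqrt a0) * (d * (/ sqrt q) ^ nd d)) in Herr
    by (unfold Rdiv; ring).
  fold K B in Herr, Hamp; lra.
Qed.

End Iteration.

Theorem theorem2p10
  (m : nat) (A : mat) (f y : vec)
  (Hrange : exists x : vec, forall i, (i < m)%nat -> matvec m A x i = f i)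
  (Hy : forall i, (i < m)%nat -> matvec m A y i = f i)
  (Hymin : forall z : vec, (forall i, (i < m)%nat -> matvec m A z i = f i) ->
           vnorm m y <= vnorm m z)
  (q a0 C eps : R)
  (Hq : 0 < q < 1) (Ha0 : 0 < a0) (HC : 1 < C) (Heps : 0 < eps < 1)
  (fd : R -> vec)
  (Hfd : forall d, 0 < d < 1 -> vnorm m (vsub (fd d) f) <= d)
  (Hfd2 : forall d, 0 < d < 1 ->
     (1 - q) * a0 * q * vnorm m (solve m (Qmat m A (a0 * q)) (fd d)) > C * Rpower d eps)
  (nd : R -> nat)
  (Hnd : forall d, 0 < d < 1 ->
     (1 <= nd d)%nat /\ Gseq m A q a0 (fd d) (nd d) <= C * Rpower d eps /\
     (forall n, (1 <= n)%nat -> Gseq m A q a0 (fd d) n <= C * Rpower d eps -> (nd d <= n)%nat)) :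
  forall e, 0 < e -> exists eta, 0 < eta /\
    forall d, 0 < d < 1 -> d < eta ->
      vnorm m (vsub (useq m A q a0 (fd d) (nd d)) y) < e.
Proof.
  (* [Hrange] is implied by [Hy]. *)
  destruct (min_norm_solution_in_range m A f y Hy Hymin) as [v Hv].
  exact (stopped_iterate_converges m A f y v q a0 Hy Hv Hq Ha0 C eps fd nd HC Heps Hfd Hfd2 Hnd).
Qed.
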